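(* Let $\varphi$ be a sublinear metric-compatible function and $T\in\mathrm{Aut}(X,\mu)$ aperiodic. Then for every $U\in[T]_\varphi$, $\lim_{n\to\infty}\frac{1}{n}d_{\varphi,T}(U^n,\mathrm{id})=0$.
   Context: $(X,\mu)$ standard atomless probability space; $\mathrm{Aut}(X,\mu)$ measure-preserving transformations modulo null sets. For aperiodic $T$, $[T]$ is the set of $U\in\mathrm{Aut}(X,\mu)$ with $U(x)=T^{c_U(x)}(x)$ a.e. for a measurable $c_U:X\to\mathbb Z$. $\varphi:\mathbb R_+\to\mathbb R_+$ is metric-compatible if subadditive, non-decreasing, $\varphi(0)=0$, $\varphi(t)>0$ for $t>0$; sublinear if $\varphi(t)/t\to0$. $[T]_\varphi=\{U\in[T]:\int_X\varphi(|c_U|)d\mu<\infty\}$ and $d_{\varphi,T}(U,V)=\int_X\varphi(|c_U(x)-c_V(x)|)d\mu$. *)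

From HB Require Import structures.
From mathcomp Require Import all_boot all_order all_algebra.
From mathcomp Require Import all_classical all_reals all_analysis.
Set Implicit Arguments. Unset Strict Implicit. Unset Printing Implicit Defensive.
Import Order.TTheory GRing.Theory Num.Theory.
Import numFieldNormedType.Exports.
Local Open Scope classical_set_scope.
Local Open Scope ring_scope.

Section Defs.
Context {d : measure_display} {X : measurableType d} {R : realType}.

Definition is_metric (dist : X -> X -> R) : Prop :=
  (forall x y, 0 <= dist x y) /\
  (forall x y, dist x y = 0 <-> x = y) /\
  (forall x y, dist x y = dist y x) /\
  (forall x y z, dist x z <= dist x y + dist y z).

Definition metric_open (dist : X -> X -> R) (A : set X) : Prop :=
  forall x, A x -> exists2 e : R, 0 < e & [set y | dist x y < e] `<=` A.

Definition metric_complete (dist : X -> X -> R) : Prop :=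
  forall u : nat -> X,
    (forall e : R, 0 < e -> exists N, forall m n, (N <= m)%N -> (N <= n)%N ->
        dist (u m) (u n) < e) ->
    exists l, forall e : R, 0 < e -> exists N, forall n, (N <= n)%N -> dist (u n) l < e.

Definition metric_separable (dist : X -> X -> R) : Prop :=
  exists q : nat -> X, forall x (e : R), 0 < e -> exists n, dist x (q n) < e.

Definition standard_Borel : Prop :=
  exists dist : X -> X -> R,
    [/\ is_metric dist, metric_complete dist, metric_separable dist &
        (@measurable d X) = <<s metric_open dist >>].

Definition atomless (mu : {measure set X -> \bar R}) : Prop :=
  forall A, measurable A -> (0 < mu A)%E ->
    exists2 B, measurable B /\ B `<=` A & (0 < mu B)%E /\ (mu B < mu A)%E.

(* ---- elements of Aut(X,mu), represented by a bimeasurable bijection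
   T with inverse Ti preserving mu ---- *)
Definition mp_bij (mu : {measure set X -> \bar R}) (T Ti : X -> X) : Prop :=
  [/\ measurable_fun setT T, measurable_fun setT Ti,
      cancel T Ti, cancel Ti T &
      forall A, measurable A -> mu (T @^-1` A) = mu A].

Definition tpow (T Ti : X -> X) (k : int) : X -> X :=
  match k with
  | Posz n => iter n T
  | Negz n => iter n.+1 Ti
  end.

Definition aperiodic (mu : {measure set X -> \bar R}) (T : X -> X) : Prop :=
  {ae mu, forall x, forall n : nat, (0 < n)%N -> iter n T x <> x}.

Definition int_measurable (c : X -> int) : Prop :=
  forall k : int, measurable (c @^-1` [set k]).

Definition is_cocycle (mu : {measure set X -> \bar R}) (T Ti V : X -> X)
    (c : X -> int) : Prop :=
  int_measurable c /\ {ae mu, forall x, V x = tpow T Ti (c x) x}.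

Definition in_full_group (mu : {measure set X -> \bar R}) (T Ti U Ui : X -> X)
  : Prop :=
  mp_bij mu U Ui /\ exists c, is_cocycle mu T Ti U c.

Definition phi_int (mu : {measure set X -> \bar R}) (phi : R -> R)
    (c : X -> int) : \bar R :=
  (\int[mu]_x (phi `|(c x)%:~R|)%:E)%E.

Definition in_phi_full_group (mu : {measure set X -> \bar R}) (phi : R -> R)
    (T Ti U Ui : X -> X) : Prop :=
  mp_bij mu U Ui /\
  exists c, is_cocycle mu T Ti U c /\ (phi_int mu phi c < +oo)%E.

End Defs.

(* metric-compatible and sublinear functions phi : R_+ -> R_+
   (represented as R -> R, constrained on [0, +oo)) *)
Definition metric_compatible {R : realType} (phi : R -> R) : Prop :=
  [/\ phi 0 = 0,
      (forall s t, 0 <= s -> 0 <= t -> phi (s + t) <= phi s + phi t),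
      (forall s t, 0 <= s -> s <= t -> phi s <= phi t),
      (forall t, 0 < t -> 0 < phi t) &
      (forall t, 0 <= t -> 0 <= phi t)].

Definition sublinear {R : realType} (phi : R -> R) : Prop :=
  (phi t / t) @[t --> +oo] --> (0 : R).

(* Write c_n = sum_(k < n) c_1 o U^k (the cocycle identity, forced a.e. by
   aperiodicity of T). For a cut-off K, bounding each |c_1 o U^k| by K plus its
   part above K and using that phi is monotone and subadditive gives
     int phi(|c_n|) <= phi(n K) + n int_{|c_1| > K} phi(|c_1|),
   since U preserves mu. Dividing by n, the first term is K phi(n K)/(n K),
   which vanishes by sublinearity, and the second tends to 0 as K grows by
   dominated convergence (phi(|c_1|) is integrable). *)

From HB Require Import structures.
From mathcomp Require Import all_boot all_order all_algebra.
From mathcomp Require Import all_classical all_reals all_analysis.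
From mathcomp Require Import ring zify measurable_realfun.
Set Implicit Arguments. Unset Strict Implicit. Unset Printing Implicit Defensive.
Import Order.TTheory GRing.Theory Num.Theory.
Local Open Scope classical_set_scope.
Local Open Scope ring_scope.

Section IntegerPowers.
Context {d : measure_display} {X : measurableType d} (T Ti : X -> X).
Hypotheses (TK : cancel T Ti) (TiK : cancel Ti T).

Lemma tpowS (k : int) x : tpow T Ti (k + 1) x = T (tpow T Ti k x).
Proof.
case: k => [n|[|n]]; first by have -> : Posz n + 1 = Posz n.+1 by lia.
  by rewrite /= TiK.
have -> : Negz n.+1 + 1 = Negz n by rewrite !NegzE; lia.
by rewrite /= TiK.
Qed.

Lemma tpowB1 (k : int) x : tpow T Ti (k - 1) x = Ti (tpow T Ti k x).
Proof. by rewrite -[in RHS](subrK 1 k) tpowS TK. Qed.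

Lemma tpowD (a b : int) x : tpow T Ti a (tpow T Ti b x) = tpow T Ti (a + b) x.
Proof.
case: a => [n|n]; elim: n => [|n IH].
- by rewrite add0r.
- have -> : Posz n.+1 + b = (Posz n + b) + 1 by lia.
  by rewrite tpowS -IH.
- have -> : Negz 0 + b = b - 1 by rewrite NegzE; lia.
  by rewrite tpowB1.
- have -> : Negz n.+1 + b = (Negz n + b) - 1 by rewrite !NegzE; lia.
  by rewrite tpowB1 -IH.
Qed.

Lemma tpow_inj x : (forall n : nat, (0 < n)%N -> iter n T x <> x) ->
  injective (fun k => tpow T Ti k x).
Proof.
move=> aper a b /= eab.
have xE : x = tpow T Ti (b - a) x.
  by have := congr1 (tpow T Ti (- a)) eab; rewrite !tpowD // addNr addrC.
apply/eqP; rewrite eq_sym -subr_eq0; apply/eqP.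
case: (b - a) xE => [[|n]|n] xE //; exfalso; apply: (aper n.+1) => //.
have iterK m y : iter m T (iter m Ti y) = y.
  by elim: m y => // m IH y; rewrite iterSr iterS TiK IH.
by rewrite [in LHS]xE iterK.
Qed.

End IntegerPowers.

Section MeasurePreserving.
Context {d : measure_display} {X : measurableType d} {R : realType}.
Variable mu : {measure set X -> \bar R}.
Local Open Scope ereal_scope.

Definition measure_preserving (V : X -> X) :=
  measurable_fun setT V /\ forall A, measurable A -> mu (V @^-1` A) = mu A.

Lemma measurable_preimageT (V : X -> X) A :
  measurable_fun setT V -> measurable A -> measurable (V @^-1` A).
Proof. by move=> mV mA; rewrite -[_ @^-1` _]setTI; exact: mV. Qed.

Lemma measure_preserving_iter (V : X -> X) k :
  measure_preserving V -> measure_preserving (iter k V).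
Proof.
case=> mV pV; elim: k => [|k [mVk pVk]]; first by split=> //; exact: measurable_id.
split; first exact: measurableT_comp mV mVk.
move=> A mA; rewrite -[LHS]/(mu (iter k V @^-1` (V @^-1` A))).
by rewrite pVk ?pV //; exact: measurable_preimageT.
Qed.

Lemma ae_measure_preserving (V : X -> X) (P : X -> Prop) :
  measure_preserving V -> {ae mu, forall x, P x} -> {ae mu, forall x, P (V x)}.
Proof.
case=> mV pV [N [mN N0 sN]]; exists (V @^-1` N); split.
- exact: measurable_preimageT.
- by rewrite pV.
- by move=> x /= nP; apply: sN.
Qed.

Lemma ge0_integral_measure_preserving (V : X -> X) (f : X -> \bar R) :
  measure_preserving V -> measurable_fun [set: X] f -> (forall x, 0 <= f x) ->
  \int[mu]_x f (V x) = \int[mu]_x f x.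
Proof.
case=> mV pV mf f0.
have := ge0_integral_pushforward mV mu measurableT mf (fun y _ => f0 y).
rewrite preimage_setT => <-.
by apply: eq_measure_integral => A mA _; rewrite -pV.
Qed.

End MeasurePreserving.

Lemma mp_bij_preserving {d} {X : measurableType d} {R : realType}
    (mu : {measure set X -> \bar R}) (V Vi : X -> X) :
  mp_bij mu V Vi -> measure_preserving mu V.
Proof. by case. Qed.

Lemma cocycle_iterE {d} {X : measurableType d} {R : realType}
    (mu : {measure set X -> \bar R}) (T Ti U Ui : X -> X) (c1 : X -> int)
    (c : nat -> X -> int) :
  mp_bij mu T Ti -> aperiodic mu T -> mp_bij mu U Ui ->
  is_cocycle mu T Ti U c1 ->
  (forall n, is_cocycle mu T Ti (iter n U) (c n)) ->
  {ae mu, forall x n, c n x = \sum_(k < n) c1 (iter k U x)}.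
Proof.
move=> [_ _ TK TiK _] aper /mp_bij_preserving pU [_ c1E] cE.
have c1E_iter : {ae mu, forall x k,
    U (iter k U x) = tpow T Ti (c1 (iter k U x)) (iter k U x)}.
  apply: ae_foralln => k.
  exact: (ae_measure_preserving (P := fun y => U y = tpow T Ti (c1 y) y)
    (measure_preserving_iter k pU) c1E).
have cE_all : {ae mu, forall x n, iter n U x = tpow T Ti (c n x) x}.
  by apply: ae_foralln => n; exact: (cE n).2.
move: c1E_iter cE_all aper; apply: filterS3 => x Ux cx aperx n.
have iterUE m : iter m U x = tpow T Ti (\sum_(k < m) c1 (iter k U x)) x.
  elim: m => [|m IH]; first by rewrite big_ord0.
  by rewrite big_ord_recr /= Ux IH tpowD // addrC.
by apply: (tpow_inj TK TiK aperx); rewrite /= -cx -iterUE.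
Qed.

Section MetricCompatible.
Context {R : realType} (phi : R -> R).
Hypothesis phi_mc : metric_compatible phi.

Definition phi_above (K t : R) := if t <= K then 0 else phi t.

Lemma phi_ge0 t : 0 <= t -> 0 <= phi t.
Proof. by case: phi_mc => _ _ _ _; apply. Qed.

Lemma phi_above_ge0 K t : 0 <= t -> 0 <= phi_above K t.
Proof. by rewrite /phi_above; case: ifP => // _; exact: phi_ge0. Qed.

Lemma phi_above_le K t : 0 <= t -> phi_above K t <= phi t.
Proof. by rewrite /phi_above; case: ifP => // _; exact: phi_ge0. Qed.

Lemma phi_sum_le n (t : nat -> R) : (forall k, 0 <= t k) ->
  phi (\sum_(k < n) t k) <= \sum_(k < n) phi (t k).
Proof.
case: phi_mc => phi0 phiD _ _ _ t_ge0.
elim: n => [|n IH]; first by rewrite !big_ord0 phi0.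
rewrite !big_ord_recr /=; apply: le_trans (phiD _ _ _ _) _ => //.
  exact: sumr_ge0.
exact: lerD.
Qed.

Lemma phi_sum_le_above n (t : nat -> R) (K : R) : 0 <= K -> (forall k, 0 <= t k) ->
  phi (\sum_(k < n) t k) <= phi (n%:R * K) + \sum_(k < n) phi_above K (t k).
Proof.
case: phi_mc => phi0 phiD phi_mono _ _ K_ge0 t_ge0.
pose big s := if s <= K then 0 else s.
have big_ge0 k : 0 <= big (t k) by rewrite /big; case: ifP.
have split_le : \sum_(k < n) t k <= n%:R * K + \sum_(k < n) big (t k).
  have -> : n%:R * K = \sum_(k < n) K by rewrite sumr_const card_ord mulr_natl.
  rewrite -big_split /=.
  by apply: ler_sum => k _; rewrite /big; case: ifP => [|_]; rewrite ?addr0 ?lerDr.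
apply: le_trans (phi_mono _ _ _ split_le) _; first exact: sumr_ge0.
apply: le_trans (phiD _ _ _ _) _; [exact: mulr_ge0|exact: sumr_ge0|].
rewrite lerD2l; apply: le_trans (phi_sum_le _ big_ge0) _.
by apply: ler_sum => k _; rewrite /big /phi_above; case: ifP => _; rewrite ?phi0.
Qed.

Lemma phi_norm_sum_le n (a : nat -> int) (K : R) : 0 <= K ->
  phi `|(\sum_(k < n) a k)%:~R|
    <= phi (n%:R * K) + \sum_(k < n) phi_above K `|(a k)%:~R|.
Proof.
move=> K_ge0; case: phi_mc => _ _ phi_mono _ _.
apply: le_trans (phi_sum_le_above n K_ge0 (t := fun k => `|(a k)%:~R|) _) => //.
by apply: phi_mono => //; rewrite rmorph_sum; exact: ler_norm_sum.
Qed.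

End MetricCompatible.

Section IntegerValued.
Context {d : measure_display} {X : measurableType d}.

Lemma int_measurable_comp (c : X -> int) (V : X -> X) :
  int_measurable c -> measurable_fun setT V -> int_measurable (c \o V).
Proof. by move=> mc mV k; exact: (measurable_preimageT (A := c @^-1` [set k]) mV). Qed.

Lemma measurable_fun_int_comp d' (Y : measurableType d') (c : X -> int)
    (G : int -> Y) :
  int_measurable c -> measurable_fun setT (G \o c).
Proof.
move=> mc _ B mB; rewrite setTI.
have -> : (G \o c) @^-1` B = \bigcup_k (c @^-1` [set k] `&` [set _ | B (G k)]).
  apply/seteqP; split=> [x Bx|x [k _ [/= <-]]] //.
  by exists (c x).
apply: countable_bigcupT_measurable => // k; apply: measurableI => //.
by have [Bk|nBk] := pselect (B (G k));
  [rewrite (_ : [set _ | _] = setT) | rewrite (_ : [set _ | _] = set0)];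
  rewrite ?predeqE.
Qed.

End IntegerValued.

Section PhiIntegral.
Context {d : measure_display} {X : measurableType d} {R : realType}.
Variables (mu : {measure set X -> \bar R}) (phi : R -> R).
Hypothesis phi_mc : metric_compatible phi.
Local Open Scope ereal_scope.

Definition phi_int_above (K : R) (c : X -> int) :=
  \int[mu]_x (phi_above phi K `|(c x)%:~R|)%:E.

Lemma measurable_phi_comp (f : R -> R) (c : X -> int) :
  int_measurable c -> measurable_fun setT (fun x => (f `|(c x)%:~R|)%:E).
Proof. exact: (measurable_fun_int_comp (fun k : int => (f `|k%:~R|)%:E)). Qed.

Lemma phi_int_ge0 c : 0 <= phi_int mu phi c.
Proof. by apply: integral_ge0 => x _; rewrite lee_fin phi_ge0. Qed.

Lemma phi_int_above_ge0 K c : 0 <= phi_int_above K c.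
Proof.
by apply: integral_ge0 => x _; rewrite lee_fin; apply: phi_above_ge0.
Qed.

Lemma phi_int_above_le K c :
  int_measurable c -> phi_int_above K c <= phi_int mu phi c.
Proof.
move=> mc; apply: ge0_le_integral => //; try exact: measurable_phi_comp.
- by move=> x _; rewrite lee_fin; apply: phi_above_ge0.
- by move=> x _; rewrite lee_fin; apply: phi_above_le.
Qed.

Lemma phi_int_above_cvg0 (c : X -> int) :
  int_measurable c -> phi_int mu phi c < +oo ->
  (fun K : nat => phi_int_above K%:R c) @ \oo --> 0.
Proof.
move=> mc phi_c_fin.
have phi_c_int : mu.-integrable setT (fun x => (phi `|(c x)%:~R|)%:E).
  apply/integrableP; split; first exact: measurable_phi_comp.
  rewrite (eq_integral (fun x => (phi `|(c x)%:~R|)%:E)) //.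
  by move=> x _; rewrite gee0_abs // lee_fin; apply: phi_ge0.
have above_cvg0 : {ae mu, forall x, setT x ->
    (fun K : nat => (phi_above phi K%:R `|(c x)%:~R|)%:E) @ \oo --> cst 0 x}.
  apply: aeW => x _; apply: cvg_near_cst; exists `|c x|%N => // K /= cK.
  by rewrite /phi_above ifT // -intr_norm -natr_absz ler_nat.
have above_dom : {ae mu, forall x K, setT x ->
    `|(phi_above phi K%:R `|(c x)%:~R|)%:E| <= (phi `|(c x)%:~R|)%:E}.
  apply: aeW => x K _.
  by rewrite gee0_abs ?lee_fin ?phi_above_le ?phi_above_ge0.
have [_ _ ] := dominated_convergence measurableT
  (fun K => measurable_phi_comp (phi_above phi K%:R) mc) (measurable_cst _)
  above_cvg0 phi_c_int above_dom.
by rewrite integral0.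
Qed.

End PhiIntegral.

Lemma phi_int_cocycle_le {d} {X : measurableType d} {R : realType}
    (mu : probability X R) (phi : R -> R) (T Ti U Ui : X -> X)
    (c1 : X -> int) (c : nat -> X -> int) (n : nat) (K : R) :
  metric_compatible phi -> mp_bij mu T Ti -> aperiodic mu T -> mp_bij mu U Ui ->
  is_cocycle mu T Ti U c1 -> (forall n, is_cocycle mu T Ti (iter n U) (c n)) ->
  0 <= K ->
  (phi_int mu phi (c n) <=
     (phi (n%:R * K))%:E + n%:R%:E * phi_int_above mu phi K c1)%E.
Proof.
move=> phi_mc hT aper hU hc1 hc K_ge0.
have pU := mp_bij_preserving hU.
have mc1U k : int_measurable (c1 \o iter k U).
  exact: int_measurable_comp hc1.1 (measure_preserving_iter k pU).1.
have above_ge0 (k : nat) x :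
    (0 <= (phi_above phi K `|(c1 (iter k U x))%:~R|)%:E)%E.
  by rewrite lee_fin phi_above_ge0.
have phi_nK_ge0 : 0 <= phi (n%:R * K) by apply: phi_ge0 => //; exact: mulr_ge0.
rewrite /phi_int.
apply: (le_trans (_ : _ <= \int[mu]_x ((phi (n%:R * K))%:E +
    \sum_(k < n) (phi_above phi K `|(c1 (iter k U x))%:~R|)%:E))%E).
  apply: ae_ge0_le_integral => //.
  - by move=> x _; rewrite lee_fin phi_ge0.
  - exact: measurable_phi_comp (hc n).1.
  - by move=> x _; rewrite adde_ge0 ?lee_fin // sume_ge0.
  - apply: emeasurable_funD; first exact: measurable_cst.
    by apply: emeasurable_sum => k; exact: measurable_phi_comp (mc1U k).
  - apply: filterS (cocycle_iterE hT aper hU hc1 hc) => x cE _.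
    rewrite cE sumEFin -EFinD lee_fin.
    exact: (phi_norm_sum_le phi_mc n (fun k => c1 (iter k U x))).
rewrite ge0_integralD //; first last.
- by apply: emeasurable_sum => k; exact: measurable_phi_comp (mc1U k).
- by move=> x _; rewrite sume_ge0.
have mu_setT : (mu : {measure set X -> \bar R}) [set: X] = 1%E := probability_setT mu.
rewrite integral_cst // mu_setT mule1 leeD2l //.
rewrite ge0_integral_sum //; last by move=> k; exact: measurable_phi_comp (mc1U k).
rewrite (eq_bigr (fun=> phi_int_above mu phi K c1)); last first.
  move=> k _; apply: (ge0_integral_measure_preserving
    (f := fun x => (phi_above phi K `|(c1 x)%:~R|)%:E)).
  - exact: measure_preserving_iter.
  - exact: measurable_phi_comp hc1.1.
  - by move=> x; rewrite lee_fin phi_above_ge0.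
by rewrite sumr_const card_ord mule_natl.
Qed.

(* Averaging a bound phi (n K) + n J(K): first choose K with J(K) small, then n
   so large that phi (n K) / (n K) is small. *)
Lemma sublinear_bound_average_cvg0 {R : realType} (phi : R -> R) (a J : nat -> R) :
  sublinear phi -> J @ \oo --> 0 ->
  (forall n K, a n <= phi (n%:R * K.+1%:R) + n%:R * J K.+1) ->
  (forall n, 0 <= a n) -> (fun n => n%:R^-1 * a n) @ \oo --> 0.
Proof.
move=> phi_sub J_cvg0 a_le a_ge0; apply/cvgrPdist_lt => eps eps_gt0.
have eps2_gt0 : 0 < eps / 2 by rewrite divr_gt0.
have [N _ JN] := (cvgrPdist_lt _ _).1 J_cvg0 _ eps2_gt0.
set K : R := N.+1%:R.
have K_gt0 : 0 < K by rewrite ltr0n.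
have JK : `|J N.+1| < eps / 2 by rewrite -normrN -sub0r JN /=.
have [M [_ phiM]] := (cvgrPdist_lt _ _).1 phi_sub _ (divr_gt0 eps2_gt0 K_gt0).
near=> n.
have n_gt0 : 0 < n%:R :> R by rewrite ltr0n; near: n; exists 1%N.
have nK_gtM : M < n%:R * K.
  near: n; exists (Num.trunc `|M|).+1 => // n /= Mn.
  apply: le_lt_trans (ler_norm M) _; apply: lt_le_trans (truncnS_gt _) _.
  by rewrite -[leLHS]mulr1 ler_pM ?ler0n ?ler_nat ?ler1n.
have := phiM _ nK_gtM; rewrite sub0r normrN => phi_small.
have average_le : n%:R^-1 * a n
    <= K * (phi (n%:R * K) / (n%:R * K)) + J N.+1.
  apply: le_trans (ler_wpM2l _ (a_le n N)) _; first by rewrite invr_ge0 ltW.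
  rewrite -/K le_eqVlt; apply/orP; left; apply/eqP; field.
  by rewrite (gt_eqF n_gt0) andbT -(natrD R 1 N) gt_eqF ?ltr0n.
have phi_term_small : K * (phi (n%:R * K) / (n%:R * K)) < eps / 2.
  apply: le_lt_trans (ler_wpM2l (ltW K_gt0) (ler_norm _)) _.
  by rewrite mulrC -ltr_pdivlMr.
rewrite sub0r normrN ger0_norm; last by rewrite mulr_ge0 // invr_ge0 ltW.
apply: le_lt_trans average_le _; rewrite [eps]splitr.
by apply: ltrD => //; apply: le_lt_trans JK; exact: ler_norm.
Unshelve. all: by end_near.
Qed.

Theorem mainTheorem13 (d : measure_display) (X : measurableType d) (R : realType)
  (mu : probability X R)
  (hstd : @standard_Borel d X R) (hatom : atomless mu)
  (phi : R -> R) (hphi : metric_compatible phi) (hsub : sublinear phi)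
  (T Ti : X -> X) (hT : mp_bij mu T Ti) (hap : aperiodic mu T)
  (U Ui : X -> X) (hU : in_phi_full_group mu phi T Ti U Ui)
  (c : nat -> X -> int) (hc : forall n : nat, is_cocycle mu T Ti (iter n U) (c n)) :
  (fun n : nat => ((n%:R : R)^-1)%:E * phi_int mu phi (c n))%E @ \oo --> (0 : \bar R)%E.
Proof.
case: hU => hUb [c1 [hc1 phi_c1_fin]].
have bound n K := phi_int_cocycle_le n hphi hT hap hUb hc1 hc (ler0n R K).
have above_fin K : phi_int_above mu phi K c1 \is a fin_num.
  rewrite ge0_fin_numE ?phi_int_above_ge0 //.
  exact: le_lt_trans (phi_int_above_le _ _ _ hc1.1) phi_c1_fin.
have phi_cn_fin n : phi_int mu phi (c n) \is a fin_num.
  rewrite ge0_fin_numE ?phi_int_ge0 //; apply: le_lt_trans (bound n 0%N) _.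
  by rewrite -(fineK (above_fin _)) -EFinM -EFinD ltry.
under eq_fun do rewrite -(fineK (phi_cn_fin _)) -EFinM.
apply: cvg_EFin; first exact: nearW.
apply: (sublinear_bound_average_cvg0 hsub
  (J := fun K => fine (phi_int_above mu phi K%:R c1))).
- by have /fine_cvgP[] := phi_int_above_cvg0 hphi hc1.1 phi_c1_fin.
- move=> n K; rewrite -lee_fin EFinD EFinM !fineK //; exact: bound.
- by move=> n; rewrite fine_ge0 ?phi_int_ge0.
Qed.
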